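(* Let $n\ge2$, $\omega\in\mathbb{R}^n$, $k\in\mathbb{R}_{>0}^n$ satisfy (IC1) $\sum_\mu\omega_\mu=0$, (IC2) $\omega\ne0$, (IC3) $\left|\frac{\omega_1}{k_1}\right|\le\cdots\le\left|\frac{\omega_n}{k_n}\right|$, and (IC4) $k_1\ge k_2\ge\cdots\ge k_n$. For $\sigma\in\{-1,+1\}^n$ let $f_\sigma(R)=-R+\frac1n\sum_{\mu=1}^n\sigma_\mu\sqrt{k_\mu^2R-\omega_\mu^2}$. (1) If $\sigma=(+1,\ldots,+1)$ and $f_\sigma$ has no positive roots, then $f_{\sigma'}$ has no positive roots for every $\sigma'\in\{-1,+1\}^n$. (2) If $\sigma$ has exactly one entry equal to $-1$ and $f_\sigma$ has no positive roots, then $f_{\sigma'}$ has no positive roots for every $\sigma'\in\{-1,+1\}^n$ that is smaller than $\sigma$ in the binary ordering. (3) Suppose $\sigma$ has at least two entries equal to $-1$ and $f_\sigma$ has no positive roots. Let $\ell$ be the position of the second-to-last entry equal to $-1$ in $\sigma$, and write $\sigma=(\rho_1,\rho_2)$ with $\rho_1=(\sigma_1,\ldots,\sigma_{\ell-1},-1)$ and $\rho_2=(\sigma_{\ell+1},\ldots,\sigma_n)$. Then for every $\rho_2'\in\{-1,+1\}^{n-\ell}$ that is smaller than $\rho_2$ in the binary ordering, $f_{(\rho_1,\rho_2')}$ has no positive roots.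
   Context: Square roots are nonnegative real square roots; a positive root of $f_\sigma$ is a real $R>0$ with $k_\mu^2R-\omega_\mu^2\ge0$ for all $\mu$ and $f_\sigma(R)=0$. Binary ordering: a sign vector $\tau=(\tau_1,\ldots,\tau_m)\in\{-1,+1\}^m$ is identified with the integer whose binary digits, from most significant to least significant, are $b_1b_2\cdots b_m$ with $b_i=1$ if $\tau_i=+1$ and $b_i=0$ if $\tau_i=-1$ (e.g. $(+1,-1)\equiv 10_2=2$); vectors are compared via these integers. *)

From HB Require Import structures.
From mathcomp Require Import all_boot all_order all_algebra.
From mathcomp Require Import reals.
Set Implicit Arguments. Unset Strict Implicit. Unset Printing Implicit Defensive.
Import Order.TTheory GRing.Theory Num.Theory.
Local Open Scope ring_scope.

(* Sign vectors: a sign vector in {-1,+1}^m is a [seq bool] of size m,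
   with [true] standing for +1 and [false] for -1. *)
Definition sgnR {R : pzRingType} (b : bool) : R := if b then 1 else -1.

(* Binary ordering: the integer with binary digits b_1 ... b_m (most
   significant first), b_i = 1 iff tau_i = +1. *)
Definition binval (s : seq bool) : nat := foldl (fun acc b => acc.*2 + nat_of_bool b)%N 0%N s.

Definition f_sigma {R : realType} (n : nat) (omega k : 'I_n -> R)
  (sigma : seq bool) (x : R) : R :=
  - x + n%:R^-1 * \sum_(i < n) sgnR (nth true sigma i) * Num.sqrt (k i ^+ 2 * x - omega i ^+ 2).

Definition is_pos_root {R : realType} (n : nat) (omega k : 'I_n -> R)
  (sigma : seq bool) (x : R) : Prop :=
  0 < x /\ (forall i : 'I_n, 0 <= k i ^+ 2 * x - omega i ^+ 2) /\ f_sigma omega k sigma x = 0.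

Definition no_pos_root {R : realType} (n : nat) (omega k : 'I_n -> R)
  (sigma : seq bool) : Prop :=
  forall x : R, ~ is_pos_root omega k sigma x.

From HB Require Import structures.
From mathcomp Require Import all_boot all_order all_algebra.
From mathcomp Require Import reals.
From mathcomp Require Import classical_sets topology normedtype realfun.
From mathcomp Require Import lra zify.
Import Order.TTheory GRing.Theory Num.Theory.
Import numFieldNormedType.Exports.
Local Open Scope classical_set_scope.
Local Open Scope ring_scope.

(* If [f_sigma] has no positive root, it is negative on the whole domain
   [{R > 0 | k_mu^2 R >= omega_mu^2 for all mu}]: this domain is a ray, and
   [f_sigma] is continuous and negative for large [R], so a nonnegative value
   would give a root by the intermediate value theorem.
   By (IC3) and (IC4) the square roots [sqrt (k_mu^2 R - omega_mu^2)] are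
   nonincreasing in [mu], hence [f_sigma' <= f_sigma] whenever [sigma'] is
   obtained from [sigma] by moving a -1 to an earlier position and turning
   further +1 into -1.  A sign vector below, in binary order, a vector with a
   single -1 at position [j] has a -1 at some position [<= j], so it is of this
   form; for (3) this is applied to the tail of [sigma] after position [l]. *)

Section BinaryOrder.
Local Open Scope nat_scope.

Lemma binval_foldl a s :
  foldl (fun acc b => acc.*2 + nat_of_bool b) a s = a * 2 ^ size s + binval s.
Proof.
rewrite /binval; elim: s a => [|b s IH] a /=; first by rewrite muln1 addn0.
rewrite IH (IH (0.*2 + b)) expnS -!muln2; lia.
Qed.

Lemma binval_cons b s : binval (b :: s) = b * 2 ^ size s + binval s.
Proof. by rewrite {1}/binval /= binval_foldl. Qed.

Lemma binval_ltn s : binval s < 2 ^ size s.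
Proof. by elim: s => [|b s IH] //=; rewrite binval_cons expnS; case: b => /=; lia. Qed.

Lemma binval_ltn_nth_false s t : size s = size t -> binval s < binval t ->
  exists2 p, p <= index false t & nth true s p = false.
Proof.
elim: t s => [|b t IH] [|c s] //= [size_st]; rewrite !binval_cons size_st.
case: c; last by exists 0.
case: b => /= [lt_st|]; last by have := binval_ltn t; lia.
have [|p le_p sp] := IH s size_st; first lia.
by exists p.+1.
Qed.

Lemma count_negb1_nth t i : count negb t = 1 -> i != index false t -> nth true t i.
Proof.
elim: t i => [|b t IH] i //=; case: b => /=.
- by rewrite add0n; case: i => [|i] //= c1; exact: IH.
- case: i => [|i] //= [/eqP]; rewrite -leqn0 leqNgt -has_count => /hasPn t_true _.
  case: (ltnP i (size t)) => [lt_it|le_ti]; last by rewrite nth_default.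
  by apply: negbNE; apply: t_true; exact: mem_nth.
Qed.

Lemma count_negb1_index t : count negb t = 1 -> index false t < size t.
Proof.
move=> c1; rewrite index_mem.
have /hasP [b tb /negbTE b_false] : has negb t by rewrite has_count c1.
by rewrite -b_false.
Qed.

End BinaryOrder.

Lemma ler_sgnR_mul {R : realDomainType} (a b : bool) (y : R) :
  0 <= y -> a ==> b -> sgnR a * y <= sgnR b * y.
Proof. by case: a; case: b => //= y_ge0 _; rewrite mulN1r mul1r; lra. Qed.

Section SignedSum.
Variables (R : realDomainType) (n : nat) (g : 'I_n -> R).
Hypothesis g_ge0 : forall i, 0 <= g i.

Lemma ler_sum_sgnR (a b : 'I_n -> bool) : (forall i, a i ==> b i) ->
  \sum_(i < n) sgnR (a i) * g i <= \sum_(i < n) sgnR (b i) * g i.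
Proof. by move=> le_ab; apply: ler_sum => i _; exact: ler_sgnR_mul. Qed.

Hypothesis g_nonincr : forall i j : 'I_n, (i <= j)%N -> g j <= g i.

(* [a] is [b] with its -1 at [j] moved to [p], plus possibly more -1 entries. *)
Lemma ler_sum_sgnR_shift (a b : 'I_n -> bool) (p j : 'I_n) : (p <= j)%N ->
  ~~ a p -> ~~ b j -> (p != j -> b p) -> (forall i, i != j -> a i ==> b i) ->
  \sum_(i < n) sgnR (a i) * g i <= \sum_(i < n) sgnR (b i) * g i.
Proof.
move=> le_pj /negbTE ap /negbTE bj bp le_ab.
have [eq_pj|ne_pj] := eqVneq p j.
  by apply: ler_sum_sgnR => i; have [->|/le_ab //] := eqVneq i j; rewrite -eq_pj ap.
rewrite [in X in X <= _](bigD1 j) // [in X in _ <= X](bigD1 j) //=.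
rewrite [in X in X <= _](bigD1 p) ?ne_pj // [in X in _ <= X](bigD1 p) ?ne_pj //=.
rewrite !addrA lerD //; last first.
  by apply: ler_sum => i /andP[/le_ab ? _]; exact: ler_sgnR_mul.
have := @g_nonincr _ _ le_pj; have := g_ge0 j.
by rewrite ap bj bp // /sgnR; case: (a j); lra.
Qed.

End SignedSum.

Definition radicands_ge0 {R : realType} {n : nat} (omega k : 'I_n -> R) (x : R) :=
  forall i, 0 <= k i ^+ 2 * x - omega i ^+ 2.

Section FSigma.
Context {R : realType} {n : nat} {omega k : 'I_n -> R}.

Lemma radicands_ge0_le x y : radicands_ge0 omega k x -> x <= y -> radicands_ge0 omega k y.
Proof.
by move=> rx le_xy i; apply: le_trans (rx i) _; rewrite lerD2r ler_wpM2l ?sqr_ge0.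
Qed.

Lemma continuous_f_sigma s : continuous (f_sigma omega k s).
Proof.
move=> x; apply: continuousD; first exact: continuousN.
apply: continuousM; first exact: cvg_cst.
apply: continuous_big; first exact: add_continuous.
move=> i _ y; apply: cvgM; first exact: cvg_cst.
apply: continuous_comp; last exact: sqrt_continuous.
apply: continuousB; last exact: cvg_cst.
by apply: continuousM; [exact: cvg_cst|exact: cvg_id].
Qed.

(* Each term is at most [|k i| * sqrt y], so [f_sigma] is eventually below
   [- y + K * sqrt y] with [K] the mean of the [|k i|]. *)
Lemma f_sigma_lt0_after s x : exists2 y, x <= y & f_sigma omega k s y < 0.
Proof.
pose K := n%:R^-1 * \sum_(i < n) `|k i|.
have K_ge0 : 0 <= K by rewrite mulr_ge0 ?invr_ge0 ?ler0n ?sumr_ge0.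
exists (`|x| + K ^+ 2 + 1); first by have := ler_norm x; have := sqr_ge0 K; lra.
set y := _ + 1.
have y_gt0 : 0 < y by rewrite /y; have := normr_ge0 x; have := sqr_ge0 K; lra.
have K_lt : K < Num.sqrt y.
  by rewrite -(ger0_norm K_ge0) -sqrtr_sqr ltr_sqrt // /y; have := normr_ge0 x; lra.
have sum_le : n%:R^-1 * \sum_(i < n)
    sgnR (nth true s i) * Num.sqrt (k i ^+ 2 * y - omega i ^+ 2) <= K * Num.sqrt y.
  rewrite /K -mulrA ler_wpM2l ?invr_ge0 ?ler0n // mulr_suml.
  apply: ler_sum => i _; apply: le_trans (ler_sgnR_mul _ _ _ (sqrtr_ge0 _) (implybT _)) _.
  rewrite mul1r -sqrtr_sqr -sqrtrM ?sqr_ge0 //.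
  by apply: ler_wsqrtr; have := sqr_ge0 (omega i); lra.
have : K * Num.sqrt y < Num.sqrt y * Num.sqrt y by rewrite ltr_pM2r ?sqrtr_gt0.
by rewrite -expr2 sqr_sqrtr ?ltW // /f_sigma; lra.
Qed.

Lemma no_pos_root_f_sigma_lt0 s x : no_pos_root omega k s ->
  0 < x -> radicands_ge0 omega k x -> f_sigma omega k s x < 0.
Proof.
move=> no_root x_gt0 rx; rewrite ltNge; apply/negP => fx_ge0.
have [y le_xy fy_lt0] := f_sigma_lt0_after s x.
have f_cont : {within `[x, y], continuous (f_sigma omega k s)}.
  exact/continuous_subspaceT/continuous_f_sigma.
have [|z] := IVT le_xy f_cont (v := 0).
  by rewrite ge_min le_max fx_ge0 (ltW fy_lt0) orbT.
rewrite in_itv /= => /andP[le_xz _] fz0; apply: (no_root z).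
by split; [lra | split; [exact: radicands_ge0_le rx le_xz | exact: fz0]].
Qed.

Lemma no_pos_root_le s t :
  (forall x, 0 < x -> radicands_ge0 omega k x ->
    f_sigma omega k s x <= f_sigma omega k t x) ->
  no_pos_root omega k t -> no_pos_root omega k s.
Proof.
move=> le_st no_root x [x_gt0 [rx fx0]].
by have := no_pos_root_f_sigma_lt0 _ _ no_root x_gt0 rx; have := le_st x x_gt0 rx; lra.
Qed.

Lemma no_pos_root_le_sum s t :
  (forall x, 0 < x -> radicands_ge0 omega k x ->
    \sum_(i < n) sgnR (nth true s i) * Num.sqrt (k i ^+ 2 * x - omega i ^+ 2) <=
    \sum_(i < n) sgnR (nth true t i) * Num.sqrt (k i ^+ 2 * x - omega i ^+ 2)) ->
  no_pos_root omega k t -> no_pos_root omega k s.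
Proof.
move=> le_st; apply: no_pos_root_le => x x_gt0 rx.
by rewrite /f_sigma lerD2l ler_wpM2l ?invr_ge0 ?ler0n ?le_st.
Qed.

Lemma no_pos_root_implyb s t : (forall i : 'I_n, nth true s i ==> nth true t i) ->
  no_pos_root omega k t -> no_pos_root omega k s.
Proof.
move=> le_st; apply: no_pos_root_le_sum => x _ _.
by apply: ler_sum_sgnR => // i; exact: sqrtr_ge0.
Qed.

End FSigma.

Section MonotoneRatios.
Context {R : realType} {n : nat} {omega k : 'I_n -> R}.
Hypothesis k_gt0 : forall i, 0 < k i.
Hypothesis ratio_nondecr :
  forall i j : 'I_n, (i <= j)%N -> `|omega i / k i| <= `|omega j / k j|.
Hypothesis k_nonincr : forall i j : 'I_n, (i <= j)%N -> k j <= k i.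

(* [k_i^2 x - omega_i^2 = k_i^2 (x - (omega_i / k_i)^2)] is a product of two
   nonnegative factors that are both nonincreasing in [i]. *)
Lemma sqrt_radicand_nonincr x (i j : 'I_n) : radicands_ge0 omega k x -> (i <= j)%N ->
  Num.sqrt (k j ^+ 2 * x - omega j ^+ 2) <= Num.sqrt (k i ^+ 2 * x - omega i ^+ 2).
Proof.
move=> rx le_ij; apply: ler_wsqrtr.
have omegaE l : omega l ^+ 2 = k l ^+ 2 * (omega l / k l) ^+ 2.
  by rewrite -exprMn mulrC divfK ?gt_eqF.
have rj := rx j; rewrite (omegaE i) (omegaE j) -!mulrBr in rj *.
have ratio_sqr : (omega i / k i) ^+ 2 <= (omega j / k j) ^+ 2.
  rewrite -(real_normK (num_real (omega i / k i))).
  rewrite -(real_normK (num_real (omega j / k j))).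
  by rewrite lerXn2r ?nnegrE ?ratio_nondecr.
apply: ler_pM; first exact: sqr_ge0.
- by move: rj; rewrite pmulr_rge0 // exprn_gt0.
- by rewrite lerXn2r ?nnegrE ?(ltW (k_gt0 _)) ?k_nonincr.
- by rewrite lerB.
Qed.

Lemma no_pos_root_shift s t (p j : nat) : (p <= j < n)%N ->
  nth true s p = false -> nth true t j = false -> (p != j -> nth true t p) ->
  (forall i : 'I_n, (i : nat) != j -> nth true s i ==> nth true t i) ->
  no_pos_root omega k t -> no_pos_root omega k s.
Proof.
move=> /andP[le_pj lt_jn] sp tj tp le_st; apply: no_pos_root_le_sum => x _ rx.
have lt_pn := leq_ltn_trans le_pj lt_jn.
apply: (@ler_sum_sgnR_shift _ _ _ _ _ _ _ (Ordinal lt_pn) (Ordinal lt_jn)) => //=.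
- by move=> i; exact: sqrtr_ge0.
- by move=> i i'; exact: sqrt_radicand_nonincr.
- by rewrite sp.
- by rewrite tj.
Qed.

Lemma no_pos_root_binval_lt (l : nat) (sigma rho : seq bool) :
  size sigma = n -> count negb (drop l sigma) = 1%N ->
  size rho = size (drop l sigma) -> (binval rho < binval (drop l sigma))%N ->
  no_pos_root omega k sigma -> no_pos_root omega k (take l sigma ++ rho).
Proof.
move=> size_sigma count1 size_rho lt_rho.
set t := drop l sigma in count1 size_rho lt_rho.
have [p le_p rho_p] := binval_ltn_nth_false _ _ size_rho lt_rho.
have lt_index := count_negb1_index _ count1.
have le_ln : (l <= n)%N by move: lt_index; rewrite size_drop size_sigma; lia.
have nth_take_cat i : nth true (take l sigma ++ rho) i =
    if (i < l)%N then nth true sigma i else nth true rho (i - l).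
  by rewrite nth_cat size_takel ?size_sigma //; case: ifP => // lt_il; rewrite nth_take.
have nth_sigma i : nth true sigma (l + i) = nth true t i by rewrite nth_drop.
apply: (@no_pos_root_shift _ _ (l + p) (l + index false t)).
- by move: lt_index; rewrite size_drop size_sigma leq_add2l le_p /=; lia.
- by rewrite nth_take_cat ltnNge leq_addr /= addKn.
- by rewrite nth_sigma nth_index // -index_mem.
- by rewrite eqn_add2l nth_sigma; exact: count_negb1_nth.
- move=> i ne_ij; rewrite nth_take_cat; case: ltnP => [_|le_li]; first exact: implybb.
  rewrite -[X in nth _ sigma X](subnKC le_li) nth_sigma (@count_negb1_nth t) ?implybT //.
  by apply: contra ne_ij => /eqP <-; rewrite subnKC.
Qed.

End MonotoneRatios.

Theorem theorem2 (R : realType) (n : nat) (omega k : 'I_n -> R) :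
  (2 <= n)%N ->
  (forall i, 0 < k i) ->
  \sum_(i < n) omega i = 0 ->                                   (* IC1 *)
  (exists i, omega i != 0) ->                                   (* IC2 *)
  (forall i j : 'I_n, (i <= j)%N ->
     `|omega i / k i| <= `|omega j / k j|) ->                    (* IC3 *)
  (forall i j : 'I_n, (i <= j)%N -> k j <= k i) ->               (* IC4 *)
  [/\
   (* (1) *)
   (no_pos_root omega k (nseq n true) ->
      forall sigma', size sigma' = n -> no_pos_root omega k sigma'),
   (* (2) *)
   (forall sigma, size sigma = n -> count negb sigma = 1%N ->
      no_pos_root omega k sigma ->
      forall sigma', size sigma' = n -> (binval sigma' < binval sigma)%N ->
        no_pos_root omega k sigma')
  & (* (3): l is the 1-based position of the second-to-last -1 entry *)
   (forall sigma, size sigma = n -> (2 <= count negb sigma)%N ->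
      no_pos_root omega k sigma ->
      forall l : nat, (0 < l <= n)%N -> nth true sigma l.-1 = false ->
        count negb (drop l sigma) = 1%N ->
        forall rho2', size rho2' = (n - l)%N ->
          (binval rho2' < binval (drop l sigma))%N ->
          no_pos_root omega k (take l sigma ++ rho2'))].
Proof.
move=> _ k_gt0 _ _ ratio_nondecr k_nonincr.
have binval_lt := no_pos_root_binval_lt k_gt0 ratio_nondecr k_nonincr.
split.
- move=> no_root sigma' _; apply: no_pos_root_implyb no_root => i.
  by rewrite nth_nseq if_same implybT.
- move=> sigma size_sigma count1 no_root sigma' size' lt_sigma'.
  by have := binval_lt 0%N sigma sigma'; rewrite take0 drop0 size'; apply.
- move=> sigma size_sigma _ no_root l _ _ count1 rho2' size_rho lt_rho.
  by apply: binval_lt; rewrite // size_drop size_sigma.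
Qed.
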